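(* For each $N\ge2$ let $L=\frac{2}{N-1}\sum_{1\le i<j\le N}(Q_{(i,j)}-I)$ act on bounded measurable functions on ${\mathbb T}_N=({\mathbb S}^1)^N$, where each $Q_{(i,j)}$ is a Markov operator acting only through $v_i,v_j$ (so $Q_{(i,j)}\varphi=\varphi$ whenever $\varphi$ depends on neither $v_i$ nor $v_j$). Let $\varphi\in L^\infty$ be a function depending only on $v_1,\dots,v_p$ (for a fixed $p$), regarded as a function on ${\mathbb T}_N$ for every $N\ge p$. Then the power series $e^{tL}\varphi=\sum_{k=0}^\infty\frac{t^k}{k!}L^k\varphi$ converges absolutely in $L^\infty$, uniformly in $N$ and in $t\in[0,T]$, for any $T<1/4$.
   Context: ${\mathbb S}^1$ is the unit circle; a Markov operator is a positive linear operator $Q$ with $Q1=1$, so $\|Q\varphi\|_\infty\le\|\varphi\|_\infty$. *)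

From HB Require Import structures.
From mathcomp Require Import all_boot all_order all_algebra.
From mathcomp Require Import all_classical all_reals.
From mathcomp Require Import topology normedtype sequences measure lebesgue_measure.
Set Implicit Arguments. Unset Strict Implicit. Unset Printing Implicit Defensive.
Import Order.TTheory GRing.Theory Num.Theory.
Local Open Scope classical_set_scope.
Local Open Scope ring_scope.

Section Torus.
Variable R : realType.

Definition S1 : Type := {z : R * R | z.1 ^+ 2 + z.2 ^+ 2 == 1}.

Lemma S1_base_proof : ((1:R), (0:R)).1 ^+ 2 + ((1:R), (0:R)).2 ^+ 2 == 1.
Proof. by rewrite /= expr1n expr0n addr0. Qed.
Definition S1_base : S1 := exist _ (1, 0) S1_base_proof.

Definition torus (N : nat) : Type := 'I_N -> S1.

(* The sigma-algebra on T_N: the product of the Borel sigma-algebras of the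
   circles, generated by the coordinate maps v |-> (v i).1 and v |-> (v i).2
   (these generate the Borel sets of S^1 ⊂ R^2). *)
Definition cylinders (N : nat) : set (set (torus N)) :=
  [set A | exists (i : 'I_N) (B : set R), measurable B /\
     (A = [set v | B (sval (v i)).1] \/ A = [set v | B (sval (v i)).2])].

Definition meas_fun_TN (N : nat) (f : torus N -> R) : Prop :=
  forall B : set R, measurable B -> smallest (sigma_algebra [set: torus N]) (@cylinders N) (f @^-1` B).

Definition BM (N : nat) (f : torus N -> R) : Prop :=
  meas_fun_TN f /\ exists M : R, forall v, `|f v| <= M.

Definition supnorm (N : nat) (f : torus N -> R) : R :=
  sup [set `|f v| | v in [set: torus N]].

Definition markov_op (N : nat) (Q : (torus N -> R) -> (torus N -> R)) : Prop :=
  [/\ (forall f, BM f -> BM (Q f)),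
      (forall (a b : R) f g, BM f -> BM g ->
          Q (fun v => a * f v + b * g v) = (fun v => a * Q f v + b * Q g v)),
      (forall f, BM f -> (forall v, 0 <= f v) -> forall v, 0 <= Q f v) &
      Q (fun _ => 1) = (fun _ => 1)].

Definition indep_of (N : nat) (i j : 'I_N) (f : torus N -> R) : Prop :=
  forall v w : torus N, (forall k, k != i -> k != j -> v k = w k) -> f v = f w.

Definition upd2 (N : nat) (i j : 'I_N) (v : torus N) (u : S1 * S1) : torus N :=
  fun k => if k == i then u.1 else if k == j then u.2 else v k.

(* Q acts only through (v_i, v_j): (Q f)(v) is determined by (v_i, v_j) and the
   section u |-> f(v[(v_i,v_j) := u]) of f through v; i.e. the other coordinates
   enter only as frozen parameters (as for Q f(v) = \int f(v[(v_i,v_j):=u])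
   q((v_i,v_j),du) with a fixed Markov kernel q on S^1 x S^1). *)
Definition acts_through (N : nat) (i j : 'I_N)
    (Q : (torus N -> R) -> (torus N -> R)) : Prop :=
  forall f g (v w : torus N), BM f -> BM g -> v i = w i -> v j = w j ->
    (forall u, f (upd2 i j v u) = g (upd2 i j w u)) -> Q f v = Q g w.

Definition markov_pair (N : nat) (i j : 'I_N)
    (Q : (torus N -> R) -> (torus N -> R)) : Prop :=
  [/\ markov_op Q, acts_through i j Q &
      (forall f, BM f -> indep_of i j f -> Q f = f)].

Definition genL (N : nat) (Q : 'I_N -> 'I_N -> (torus N -> R) -> (torus N -> R))
    (f : torus N -> R) : torus N -> R :=
  fun v => 2 / (N.-1)%:R *
    \sum_(i < N) \sum_(j < N | (i < j)%N) (Q i j f v - f v).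

Definition extend (p N : nat) (phi : torus p -> R) : torus N -> R :=
  fun v => phi (fun k : 'I_p =>
    match insub (val k) : option 'I_N with Some j => v j | None => S1_base end).

End Torus.

From HB Require Import structures.
From mathcomp Require Import all_boot all_order all_algebra.
From mathcomp Require Import all_classical all_reals.
From mathcomp Require Import topology normedtype sequences measure lebesgue_measure measurable_realfun.
From mathcomp Require Import ring lra.
Import Order.TTheory GRing.Theory Num.Theory.
Local Open Scope classical_set_scope.
Local Open Scope ring_scope.
Set Implicit Arguments. Unset Strict Implicit. Unset Printing Implicit Defensive.

(* If f depends on m coordinates, then (Q_(i,j) - I) f vanishes unless i or j
   is one of them; each of the m (N - 1) remaining pairs contributes a term of
   sup norm at most 2 |f| depending on at most m + 1 coordinates, and the
   prefactor 2 / (N - 1) cancels the N - 1.  By induction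
   |L^k f| <= 4^k k! C(m+k, k) |f| uniformly in N, so the k-th term of the
   exponential series is at most C(p+k, k) (4t)^k |phi|, a geometrically
   summable sequence when 4 t <= 4 T < 1. *)

HB.instance Definition _ (R : realType) (N : nat) := gen_eqMixin (torus R N).
HB.instance Definition _ (R : realType) (N : nat) := gen_choiceMixin (torus R N).
HB.instance Definition _ (R : realType) (N : nat) :=
  isPointed.Build (torus R N) (fun _ => S1_base R).

Definition torus_measurableType (R : realType) (N : nat) :=
  g_sigma_algebraType (@cylinders R N).

Lemma meas_fun_TNE (R : realType) (N : nat) (f : torus R N -> R) :
  meas_fun_TN f <-> measurable_fun [set: torus_measurableType R N] f.
Proof.
split=> [mf _ B mB | mf B mB]; last by have := mf measurableT B mB; rewrite setTI.
by rewrite setTI; exact: mf.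
Qed.

Section BoundedMeasurable.
Variables (R : realType) (N : nat).
Implicit Types (f g : torus R N -> R) (a b : R).

Lemma BM_cst a : BM (fun _ : torus R N => a).
Proof. by split; [apply/meas_fun_TNE; exact: measurable_cst | exists `|a|]. Qed.

Lemma BM_lin a b f g : BM f -> BM g -> BM (fun v => a * f v + b * g v).
Proof.
move=> [/meas_fun_TNE mf [M hM]] [/meas_fun_TNE mg [M' hM']]; split.
  by apply/meas_fun_TNE; apply: measurable_funD; apply: measurable_funM.
exists (`|a| * M + `|b| * M') => v.
by rewrite (le_trans (ler_normD _ _)) // !normrM lerD // ler_wpM2l.
Qed.

Lemma BM_scale a f : BM f -> BM (fun v => a * f v).
Proof.
move=> hf; have := BM_lin a 0 hf hf.
by under eq_fun do rewrite mul0r addr0.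
Qed.

Lemma BM_sub f g : BM f -> BM g -> BM (fun v => f v - g v).
Proof.
move=> hf hg; have := BM_lin 1 (-1) hf hg.
by under eq_fun do rewrite mul1r mulN1r.
Qed.

Lemma BM_sum (I : Type) (r : seq I) (P : pred I) (h : I -> torus R N -> R) :
  (forall x, P x -> BM (h x)) -> BM (fun v => \sum_(x <- r | P x) h x v).
Proof.
move=> hh; elim: r => [|x r IH]; first by under eq_fun do rewrite big_nil; exact: BM_cst.
under eq_fun do rewrite big_cons.
case: (boolP (P x)) => Px //.
have := BM_lin 1 1 (hh x Px) IH.
by under eq_fun do rewrite !mul1r.
Qed.

End BoundedMeasurable.

(* [extend phi] is [phi \o restrict_torus] by definition. *)
Definition restrict_torus (R : realType) (p N : nat) (v : torus R N) : torus R p :=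
  fun k => if insub (val k) : option 'I_N is Some j then v j else S1_base R.

Lemma measurable_restrict_torus (R : realType) (p N : nat) :
  measurable_fun [set: torus_measurableType R N]
    (@restrict_torus R p N : _ -> torus_measurableType R p).
Proof.
apply: (@measurability _ _ (torus_measurableType R N) (torus_measurableType R p)
  _ _ (@cylinders R p)); first by [].
move=> _ [A [k [B [mB hA]]] <-]; rewrite setTI /restrict_torus.
have const_meas (P : Prop) : measurable [set _ : torus_measurableType R N | P].
  case: (pselect P) => hP.
    by rewrite (_ : [set _ | _] = setT) //; apply/seteqP; split.
  by rewrite (_ : [set _ | _] = set0) //; apply/seteqP; split.
case: hA => ->; rewrite /preimage /=;
  case: (insub (val k) : option 'I_N) => [j|]; try exact: const_meas.
- by apply: sub_sigma_algebra; exists j, B; split => //; left.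
- by apply: sub_sigma_algebra; exists j, B; split => //; right.
Qed.

Lemma BM_extend (R : realType) (p N : nat) (phi : torus R p -> R) :
  BM phi -> BM (@extend R p N phi).
Proof.
move=> [/meas_fun_TNE mphi [M hM]]; split; last by exists M => v; exact: hM.
by apply/meas_fun_TNE; exact: (measurableT_comp mphi (@measurable_restrict_torus R p N)).
Qed.

Section IterateLinear.
Variables (R : realType) (N : nat) (A : (torus R N -> R) -> torus R N -> R).
Hypothesis A_BM : forall f, BM f -> BM (A f).
Hypothesis A_lin : forall (a b : R) f g, BM f -> BM g ->
  A (fun v => a * f v + b * g v) = (fun v => a * A f v + b * A g v).

Lemma iter_BM k f : BM f -> BM (iter k A f).
Proof. by move=> hf; elim: k => //= k; exact: A_BM. Qed.

Lemma iter_lin k (a b : R) f g : BM f -> BM g ->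
  iter k A (fun v => a * f v + b * g v) =
  (fun v => a * iter k A f v + b * iter k A g v).
Proof. by move=> hf hg; elim: k => //= k ->; rewrite A_lin //; exact: iter_BM. Qed.

Lemma iter_scale k (a : R) f : BM f ->
  iter k A (fun v => a * f v) = (fun v => a * iter k A f v).
Proof.
move=> hf; have := iter_lin k a 0 hf hf.
by under eq_fun do rewrite mul0r addr0; under [RHS]eq_fun do rewrite mul0r addr0.
Qed.

Lemma iter_sum k (I : Type) (r : seq I) (P : pred I) (h : I -> torus R N -> R) :
  (forall x, P x -> BM (h x)) ->
  iter k A (fun v => \sum_(x <- r | P x) h x v) =
  (fun v => \sum_(x <- r | P x) iter k A (h x) v).
Proof.
move=> hh; elim: r => [|x r IH].
  have -> : (fun v => \sum_(x <- [::] | P x) h x v) = (fun v => 0 * (0 : R)).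
    by apply: funext => v; rewrite big_nil mul0r.
  by rewrite iter_scale; [apply: funext => v; rewrite big_nil mul0r | exact: BM_cst].
case: (boolP (P x)) => Px.
  transitivity (iter k A (fun v => 1 * h x v + 1 * \sum_(y <- r | P y) h y v)).
    by congr iter; apply: funext => v; rewrite big_cons Px !mul1r.
  rewrite iter_lin; [|exact: hh | exact: BM_sum].
  by rewrite IH; apply: funext => v; rewrite big_cons Px !mul1r.
transitivity (iter k A (fun v => \sum_(y <- r | P y) h y v)).
  by congr iter; apply: funext => v; rewrite big_cons (negbTE Px).
by rewrite IH; apply: funext => v; rewrite big_cons (negbTE Px).
Qed.

End IterateLinear.

Lemma markov_op_norm_le (R : realType) (N : nat)
    (Q : (torus R N -> R) -> torus R N -> R) f (M : R) :
  markov_op Q -> BM f -> (forall v, `|f v| <= M) -> forall v, `|Q f v| <= M.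
Proof.
move=> [_ Qlin Qpos Q1] hf hM v.
have Q_shift_ge0 (e : R) : `|e| <= 1 -> 0 <= M + e * Q f v.
  move=> e1; have := Qpos _ (BM_lin M e (BM_cst N 1) hf).
  rewrite (Qlin _ _ _ _ (BM_cst N 1) hf) Q1 /= mulr1.
  apply=> w; have : - M <= e * f w.
    by apply: lerNnormlW; rewrite normrM -[M]mul1r ler_pM ?normr_ge0.
  lra.
have := Q_shift_ge0 1; have := Q_shift_ge0 (-1).
rewrite normrN normr1 lexx ler_norml => /(_ isT) ? /(_ isT) ?.
apply/andP; split; lra.
Qed.

Definition depends_on (R : realType) (N : nat) (S : {set 'I_N}) (f : torus R N -> R) :=
  forall v w : torus R N, (forall k, k \in S -> v k = w k) -> f v = f w.

Lemma depends_onS (R : realType) (N : nat) (S S' : {set 'I_N}) (f : torus R N -> R) :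
  S \subset S' -> depends_on S f -> depends_on S' f.
Proof. by move=> /fintype.subsetP sS hf v w h; apply: hf => k /sS; exact: h. Qed.

Section MarkovPair.
Variables (R : realType) (N : nat) (i j : 'I_N).
Variable Q : (torus R N -> R) -> torus R N -> R.
Hypothesis hQ : markov_pair i j Q.

Lemma markov_pair_depends_on S f :
  BM f -> depends_on S f -> depends_on (i |: (j |: S)) (Q f).
Proof.
move=> hf hd v w h; have [_ hat _] := hQ.
apply: hat => //; [by apply: h; rewrite !inE eqxx | by apply: h; rewrite !inE eqxx orbT|].
move=> u; apply: hd => k kS; rewrite /upd2.
by case: ifP => // _; case: ifP => // _; apply: h; rewrite !inE kS !orbT.
Qed.

Lemma markov_pair_id S f :
  BM f -> depends_on S f -> i \notin S -> j \notin S -> Q f = f.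
Proof.
move=> hf hd iS jS; have [_ _ Qid] := hQ.
apply: Qid => // v w h; apply: hd => k kS; apply: h.
  by apply: contraNneq iS => <-.
by apply: contraNneq jS => <-.
Qed.

End MarkovPair.

Lemma sum_pairs_mem_card (N : nat) (S : {set 'I_N}) :
  (\sum_(i < N) \sum_(j < N | i < j) ((i \in S) + (j \in S)) = #|S| * N.-1)%N.
Proof.
have other_card (x : 'I_N) : (\sum_(y < N) ((x < y) + (y < x)) = N.-1)%N.
  rewrite (eq_bigr (fun y : 'I_N => nat_of_bool (y != x))); last first.
    by move=> y _; rewrite neq_ltn orbC; case: ltngtP.
  rewrite (bigD1 x) //= eqxx add0n (eq_bigr (fun _ => 1%N)); last by move=> y ->.
  by rewrite sum1_card cardC1 card_ord.
rewrite (eq_bigr (fun i : 'I_N => \sum_(j < N) ((i < j) * (i \in S)) +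
    \sum_(j < N) ((i < j) * (j \in S)))%N); last first.
  move=> i _; rewrite big_mkcond -big_split /=.
  by apply: eq_bigr => j _; case: ifP; rewrite ?mul1n ?mul0n.
rewrite big_split /= [X in (_ + X)%N]exchange_big /= -big_split /=.
rewrite (eq_bigr (fun x : 'I_N => (x \in S) * N.-1)%N); last first.
  move=> x _; rewrite -(other_card x) big_distrr /= -big_split /=.
  by apply: eq_bigr => y _; rewrite mulnDr mulnC [((y < x) * _)%N]mulnC.
by rewrite -big_distrl /= -sum1_card [in RHS]big_mkcond.
Qed.

Lemma card_setU1U1_le (N : nat) (i j : 'I_N) (S : {set 'I_N}) :
  (i \in S) || (j \in S) -> (#|i |: (j |: S)| <= #|S|.+1)%N.
Proof.
rewrite !cardsU1 !inE => /orP[] ->;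
  by rewrite ?orbT /= ?add0n ?addn0 -add1n leq_add2r leq_b1.
Qed.

(* Applying L to a function of m coordinates costs a factor 4 m and adds one
   coordinate; 4^k k! C(m+k, k) dominates the product 4^k m (m+1) ... (m+k-1). *)
Definition iterate_bound (k m : nat) : nat := (4 ^ k * k`! * 'C(m + k, k))%N.

Lemma iterate_bound_step k m :
  (4 * m * iterate_bound k m.+1 <= iterate_bound k.+1 m)%N.
Proof.
rewrite /iterate_bound expnS factS -!mulnA leq_mul2l /= mulnCA leq_mul2l expn_eq0 /=.
rewrite mulnCA [(k.+1 * _)%N]mulnCA leq_mul2l gtn_eqF ?fact_gt0 //=.
by rewrite mul_bin_left addnS -addSn addnK leq_mul2r leqnSn orbT.
Qed.

Section Generator.
Variables (R : realType) (N : nat).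
Variable Q : 'I_N -> 'I_N -> (torus R N -> R) -> torus R N -> R.
Hypothesis hQ : forall i j : 'I_N, (i < j)%N -> markov_pair i j (Q i j).

Lemma genL_BM f : BM f -> BM (genL Q f).
Proof.
move=> hf; apply: BM_scale; apply: BM_sum => i _; apply: BM_sum => j ij.
by have [[QBM _ _ _] _ _] := hQ ij; apply: BM_sub => //; exact: QBM.
Qed.

Lemma genL_lin (a b : R) f g : BM f -> BM g ->
  genL Q (fun v => a * f v + b * g v) = (fun v => a * genL Q f v + b * genL Q g v).
Proof.
move=> hf hg; apply: funext => v; rewrite /genL.
rewrite (eq_bigr (fun i : 'I_N => a * \sum_(j < N | (i < j)%N) (Q i j f v - f v) +
    b * \sum_(j < N | (i < j)%N) (Q i j g v - g v))); last first.
  move=> i _; rewrite !mulr_sumr -big_split /=; apply: eq_bigr => j ij.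
  by have [[_ Qlin _ _] _ _] := hQ ij; rewrite Qlin //; ring.
by rewrite big_split /= -!mulr_sumr; ring.
Qed.

End Generator.

Section IterateGenerator.
Variables (R : realType) (N : nat).
Variable Q : 'I_N -> 'I_N -> (torus R N -> R) -> torus R N -> R.
Hypothesis hQ : forall i j : 'I_N, (i < j)%N -> markov_pair i j (Q i j).
Hypothesis hN : (2 <= N)%N.

Let iterL_scale := iter_scale (genL_BM hQ) (genL_lin hQ).
Let iterL_sum := iter_sum (genL_BM hQ) (genL_lin hQ).

Definition iterates_bounded k := forall m (S : {set 'I_N}) f (M : R),
  BM f -> depends_on S f -> (#|S| <= m)%N -> (forall v, `|f v| <= M) ->
  forall v, `|iter k (genL Q) f v| <= (iterate_bound k m)%:R * M.

Lemma iter_genL_pair_le k m S f (M : R) (i j : 'I_N) :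
  iterates_bounded k -> BM f -> depends_on S f -> (#|S| <= m)%N ->
  (forall v, `|f v| <= M) -> (i < j)%N ->
  forall v, `|iter k (genL Q) (fun w => Q i j f w - f w) v| <=
    (iterate_bound k m.+1)%:R * (M + M) * ((i \in S) + (j \in S))%:R.
Proof.
move=> IH hf hd hS hM ij v; have hQij := hQ ij.
have M_ge0 : 0 <= M by apply: le_trans (hM v).
have QfBM : BM (Q i j f) by have [[QBM _ _ _] _ _] := hQij; exact: QBM.
case: (boolP ((i \in S) || (j \in S))) => hij; last first.
  move: hij; rewrite negb_or => /andP[iS jS].
  rewrite (markov_pair_id hQij hf hd iS jS).
  have -> : (fun w => f w - f w) = (fun w => 0 * f w).
    by apply: funext => w; rewrite subrr mul0r.
  by rewrite iterL_scale // mul0r normr0 !mulr_ge0 // addr_ge0.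
have card_le : (#|i |: (j |: S)| <= m.+1)%N.
  by rewrite (leq_trans (card_setU1U1_le hij)) // ltnS.
have DBM : BM (fun w => Q i j f w - f w) by exact: BM_sub.
have Dbound w : `|Q i j f w - f w| <= M + M.
  rewrite (le_trans (ler_normB _ _)) // lerD //.
  by have [Qop _ _] := hQij; exact: markov_op_norm_le Qop hf hM w.
have Ddep : depends_on (i |: (j |: S)) (fun w => Q i j f w - f w).
  move=> x y hxy; rewrite (markov_pair_depends_on hQij hf hd hxy); congr (_ - _).
  by apply: (depends_onS _ hd hxy); apply/fintype.subsetP => l lS; rewrite !inE lS !orbT.
rewrite (le_trans (IH _ _ _ _ DBM Ddep card_le Dbound v)) //.
rewrite ler_peMr ?mulr_ge0 ?addr_ge0 // ler1n.
by case/orP: hij => ->; rewrite ?addn1 ?addnS.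
Qed.

Lemma iterates_bounded_succ k : iterates_bounded k -> iterates_bounded k.+1.
Proof.
move=> IH m S f M hf hd hS hM v.
have M_ge0 : 0 <= M by apply: le_trans (hM v).
set c : R := 2 / (N.-1)%:R.
have c_ge0 : 0 <= c by rewrite divr_ge0.
have cN : c * (N.-1)%:R = 2 by rewrite mulfVK // pnatr_eq0; case: N hN => [|[|n]].
set D := fun (i j : 'I_N) w => Q i j f w - f w.
have DBM (i j : 'I_N) : (i < j)%N -> BM (D i j).
  by move=> ij; have [[QBM _ _ _] _ _] := hQ ij; exact: BM_sub (QBM _ hf) hf.
have sumBM (i : 'I_N) : BM (fun w => \sum_(j < N | (i < j)%N) D i j w).
  by apply: BM_sum; exact: DBM.
have eL : genL Q f = fun w => c * \sum_(i < N) \sum_(j < N | (i < j)%N) D i j w by [].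
rewrite iterSr eL iterL_scale; last by apply: BM_sum => i _; exact: sumBM.
rewrite iterL_sum /=; last by move=> i _; exact: sumBM.
(* Only the #|S| (N - 1) pairs meeting S contribute, and 2 / (N - 1) cancels N - 1. *)
set B := (iterate_bound k m.+1)%:R * (M + M).
have hsum : `|\sum_(i < N) iter k (genL Q) (fun w => \sum_(j < N | (i < j)%N) D i j w) v|
    <= B * (#|S| * N.-1)%N%:R.
  rewrite -sum_pairs_mem_card natr_sum mulr_sumr.
  apply: (le_trans (ler_norm_sum _ _ _)); apply: ler_sum => i _.
  rewrite iterL_sum /=; last exact: DBM.
  rewrite natr_sum mulr_sumr; apply: (le_trans (ler_norm_sum _ _ _)).
  by apply: ler_sum => j ij; exact: iter_genL_pair_le.
rewrite normrM ger0_norm // (le_trans (ler_wpM2l c_ge0 hsum)) //.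
have step : 4 * m%:R * (iterate_bound k m.+1)%:R <= (iterate_bound k.+1 m)%:R :> R.
  by rewrite -!natrM ler_nat iterate_bound_step.
have hSm : (#|S|%:R : R) <= m%:R by rewrite ler_nat.
have bM_ge0 : 0 <= (iterate_bound k m.+1)%:R * M by rewrite mulr_ge0.
have := ler_wpM2r M_ge0 step.
rewrite natrM /B.
have -> : c * ((iterate_bound k m.+1)%:R * (M + M) * (#|S|%:R * (N.-1)%:R))
  = (c * (N.-1)%:R) * (2 * #|S|%:R * ((iterate_bound k m.+1)%:R * M)) by ring.
rewrite cN; nra.
Qed.

Lemma iterates_boundedP k : iterates_bounded k.
Proof.
elim: k => [|k IH]; last exact: iterates_bounded_succ.
by move=> m S f M _ _ _ hM v; rewrite /iterate_bound /= bin0 mul1r.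
Qed.

End IterateGenerator.

Lemma extend_depends_on (R : realType) (p N : nat) (hpN : (p <= N)%N)
    (phi : torus R p -> R) :
  depends_on [set widen_ord hpN k | k : 'I_p] (@extend R p N phi).
Proof.
move=> v w h; rewrite /extend; congr phi; apply: funext => k.
case: insubP => [j _ hj|] //; apply: h.
by rewrite (_ : j = widen_ord hpN k) ?imset_f //; apply: val_inj.
Qed.

Lemma supnorm_iter_genL_extend (R : realType) (p N : nat)
    (Q : 'I_N -> 'I_N -> (torus R N -> R) -> torus R N -> R)
    (phi : torus R p -> R) (M : R) k :
  (2 <= N)%N -> (p <= N)%N ->
  (forall i j : 'I_N, (i < j)%N -> markov_pair i j (Q i j)) ->
  BM phi -> (forall v, `|phi v| <= M) ->
  supnorm (iter k (genL Q) (@extend R p N phi)) <= (iterate_bound k p)%:R * M.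
Proof.
move=> hN hpN hQ hphi hM; apply: ge_sup.
  exists `|iter k (genL Q) (@extend R p N phi) (fun _ => S1_base R)|.
  by exists (fun _ => S1_base R).
move=> _ [v _ <-]; apply: (iterates_boundedP hQ hN k (BM_extend N hphi)
  (extend_depends_on (hpN := hpN) phi)) => [|w]; last exact: hM.
by rewrite (leq_trans (leq_imset_card _ _)) // card_ord.
Qed.

Lemma binomial_exp_le (R : numDomainType) (s : R) n k : 0 <= s -> (k <= n)%N ->
  'C(n, k)%:R * s ^+ k <= (1 + s) ^+ n.
Proof.
move=> s_ge0 kn; rewrite addrC exprD1n (bigD1 (Ordinal (kn : k < n.+1)%N)) //=.
by rewrite mulr_natl lerDl sumr_ge0 // => i _; rewrite mulrn_wge0 // exprn_ge0.
Qed.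

Lemma binomial_geometric_le (R : realFieldType) (q : R) p : 0 <= q < 1 ->
  exists C r : R,
    [/\ 0 <= C, 0 < r < 1 & forall k, 'C(p + k, k)%:R * q ^+ k <= C * r ^+ k].
Proof.
(* C(p+k, k) s^k <= (1+s)^(p+k), and s is so large that (1+s) q / s <= (1+q) / 2. *)
move=> /andP[q_ge0 q_lt1]; set s := 2 / (1 - q).
have s_gt0 : 0 < s by rewrite divr_gt0 // subr_gt0.
have qs_ge0 : 0 <= q / s by rewrite divr_ge0 // ltW.
exists ((1 + s) ^+ p), ((1 + q) / 2); split.
- by rewrite exprn_ge0 // addr_ge0 // ltW.
- by apply/andP; split; lra.
move=> k.
have qs_le : (1 + s) * (q / s) <= (1 + q) / 2.
  have -> : (1 + s) * (q / s) = q + q * (1 - q) / 2.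
    by rewrite /s; field; rewrite subr_eq0 gt_eqF.
  nra.
have -> : q ^+ k = s ^+ k * (q / s) ^+ k by rewrite -exprMn mulrC divfK ?gt_eqF.
rewrite mulrA (le_trans (ler_wpM2r (exprn_ge0 _ qs_ge0)
  (binomial_exp_le (ltW s_gt0) (leq_addl p k)))) //.
rewrite exprD -mulrA -exprMn; apply: ler_wpM2l.
  by rewrite exprn_ge0 // addr_ge0 // ltW.
by rewrite lerXn2r // nnegrE; [rewrite mulr_ge0 // addr_ge0 // ltW | lra].
Qed.

Lemma geometric_tail_small (R : realType) (A r eps : R) :
  0 <= A -> 0 < r < 1 -> 0 < eps ->
  exists K0 : nat, forall K, A * \sum_(K0 <= k < K) r ^+ k <= eps.
Proof.
move=> A_ge0 /andP[r_gt0 r_lt1] eps_gt0.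
have r1_gt0 : 0 < 1 - r by rewrite subr_gt0.
have d_gt0 : 0 < eps * (1 - r) / (A + 1) by rewrite !divr_gt0 ?mulr_gt0 // ltr_wpDl.
have r_norm : `|r| < 1 by rewrite gtr0_norm.
have [K0 _ hK0] := cvgr0_norm_lt (F := \oo) (fun n => r ^+ n) (cvg_expr r_norm) _ d_gt0.
have {hK0} := hK0 K0 (leqnn _); rewrite /= normrX gtr0_norm // => hK0.
exists K0 => K; case: (leqP K0 K) => [K0K | KK0]; last first.
  by rewrite big_geq ?(ltnW KK0) // mulr0; exact: ltW.
rewrite -(subnKC K0K) geometric_partial_tail.
have := geometric_le_lim (K - K0) (exprn_ge0 K0 (ltW r_gt0)) r_gt0 r_norm.
move=> /(ler_wpM2l A_ge0)/le_trans; apply.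
move: hK0; rewrite ltr_pdivlMr ?ltr_wpDl // => hK0.
rewrite mulrA ler_pdivrMr //; nra.
Qed.

Lemma exp_coef_iterate_bound (R : numFieldType) (t : R) k p :
  t ^+ k / k`!%:R * (iterate_bound k p)%:R = (4 * t) ^+ k * 'C(p + k, k)%:R.
Proof.
rewrite /iterate_bound !natrM natrX exprMn; field.
by rewrite pnatr_eq0 -lt0n fact_gt0.
Qed.

Theorem mainTheorem4 (R : realType) (p : nat) (phi : torus R p -> R)
    (Q : forall N : nat, 'I_N -> 'I_N -> (torus R N -> R) -> (torus R N -> R))
    (T : R) :
  BM phi ->
  (forall (N : nat) (i j : 'I_N), (2 <= N)%N -> (i < j)%N ->
      markov_pair i j (Q N i j)) ->
  T < 1 / 4 ->
  forall eps : R, 0 < eps ->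
  exists K0 : nat, forall N : nat, (2 <= N)%N -> (p <= N)%N ->
    forall t : R, 0 <= t <= T -> forall K : nat,
      \sum_(K0 <= k < K)
         t ^+ k / (k`!)%:R * supnorm (iter k (genL (Q N)) (@extend R p N phi))
      <= eps.
Proof.
move=> hphi hQ hT eps eps_gt0; have [_ [M hM]] := hphi.
have M_ge0 : 0 <= M by apply: le_trans (hM (fun _ => S1_base R)).
have [T_lt0 | T_ge0] := ltP T 0.
  by exists 0%N => N _ _ t /andP[t_ge0 t_le]; lra.
have q01 : 0 <= 4 * T < 1 by apply/andP; split; lra.
have [C [r [C_ge0 r01 hCr]]] := binomial_geometric_le p q01.
have [K0 hK0] := geometric_tail_small (mulr_ge0 M_ge0 C_ge0) r01 eps_gt0.
exists K0 => N hN hpN t /andP[t_ge0 t_le] K; apply: le_trans (hK0 K).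
rewrite mulr_sumr; apply: ler_sum => k _.
have hnorm := supnorm_iter_genL_extend k hN hpN (fun i j => hQ N i j hN) hphi hM.
rewrite (le_trans (ler_wpM2l _ hnorm)) ?divr_ge0 ?exprn_ge0 //.
rewrite mulrA exp_coef_iterate_bound mulrC -mulrA ler_wpM2l //.
rewrite mulrC (le_trans _ (hCr k)) // ler_wpM2l // lerXn2r ?nnegrE //; lra.
Qed.
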